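(* For every positive integer $n$, every feasible partition $w_1\le\dots\le w_m$ of $n$ and every $1\le i\le m$, one has $w_i\le 3^{i-1}$ and $R_i=w_1+\dots+w_i\le \frac{3^i-1}{2}$; these values are the highest possible, i.e. $3^{i-1}$ is the largest value the $i$-th part of any feasible partition can take, and $\frac{3^i-1}{2}$ is the largest positive integer whose feasible partitions have exactly $i$ parts.
   Context: A weighing partition of a positive integer $n$ is a multiset of positive integers summing to $n$ such that every integer $\ell$ with $1\le\ell\le n$ is a sum $\sum_j u_jw_j$ with $u_j\in\{-1,0,1\}$. A feasible partition of $n$ is a weighing partition of $n$ whose number of parts $m$ is minimal among all weighing partitions of $n$, written in nondecreasing order $w_1\le\dots\le w_m$. *)

From mathcomp Require Import all_boot all_order all_algebra.
Set Implicit Arguments. Unset Strict Implicit. Unset Printing Implicit Defensive.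
Import GRing.Theory Num.Theory.

(* A partition (multiset of positive integers) is represented by a list w;
   its parts are w`_0, ..., w`_(size w - 1). *)

Definition weighing_property (n : nat) (w : seq nat) : Prop :=
  forall l : nat, 1 <= l <= n ->
    exists u : seq int,
      [/\ size u = size w,
          all (fun x : int => x \in [:: (-1)%R; 0%R; 1%R]) u &
          (\sum_(j < size w) nth 0%R u j * Posz (nth 0%N w j))%R = Posz l].

Definition weighing_partition (n : nat) (w : seq nat) : Prop :=
  [/\ all (fun x => 0 < x) w, sumn w = n & weighing_property n w].

Definition feasible_partition (n : nat) (w : seq nat) : Prop :=
  [/\ weighing_partition n w,
      (forall w' : seq nat, weighing_partition n w' -> size w <= size w') &
      sorted leq w].

(* A list of m parts has at most 3^m signed sums, and a weighing partition of n
   must reach the 2n + 1 integers of [-n, n] (the set of signed sums is closed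
   under negation), so 2n + 1 <= 3^m.  Cut a sorted weighing partition after
   its i-th part: the signed sums of the head lie in [-R_i, R_i], while those
   of the tail either equal its total or fall short of it by at least w_(i+1).
   So n - (2 R_i + 1) is reachable only if w_(i+1) <= 2 R_i + 1, whence
   2 R_i + 1 <= 3^i by induction.  The parts 1, 3, ..., 3^(i-1) attain all
   these bounds: appending a part x <= 2R + 1 to a list reaching [-R, R]
   yields a list reaching [-(R + x), R + x]. *)

From mathcomp Require Import all_boot all_order all_algebra zify.
Set Implicit Arguments. Unset Strict Implicit. Unset Printing Implicit Defensive.
Import GRing.Theory Num.Theory.

Section SignedSums.

Local Open Scope ring_scope.

Definition signs : seq int := [:: -1; 0; 1].

Lemma signsP (d : int) : d \in signs -> [\/ d = -1, d = 0 | d = 1].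
Proof. by rewrite !inE => /or3P [] /eqP; [apply: Or31|apply: Or32|apply: Or33]. Qed.

Definition signed_sums (w : seq nat) : seq int :=
  foldr (fun x S => [seq d * x%:Z + z | d <- signs, z <- S]) [:: 0] w.

Lemma signed_sums_cons x w :
  signed_sums (x :: w) = [seq d * x%:Z + z | d <- signs, z <- signed_sums w].
Proof. by []. Qed.

Lemma size_signed_sums w : size (signed_sums w) = (3 ^ size w)%N.
Proof. by elim: w => // x w IHw; rewrite signed_sums_cons size_allpairs IHw expnS. Qed.

Lemma signed_sumsP w z :
  reflect (exists u : seq int, [/\ size u = size w, all (mem signs) u &
             \sum_(j < size w) u`_j * (nth 0%N w j)%:Z = z])
          (z \in signed_sums w).
Proof.
elim: w z => [|x w IHw] z; rewrite ?signed_sums_cons.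
  apply: (iffP idP) => [|[u [_ _ <-]]]; last by rewrite big_ord0 inE.
  by rewrite inE => /eqP ->; exists [::]; rewrite big_ord0.
apply: (iffP allpairsP) => [[[d y] /= [sd /IHw [u [su au <-] ->]]] | [[|d u] []] //].
  by exists (d :: u); rewrite /= big_ord_recl su sd au.
move=> [su] /= /andP [sd au]; rewrite big_ord_recl => <-.
exists (d, \sum_(j < size w) u`_j * (nth 0%N w j)%:Z); split=> //.
by apply/IHw; exists u.
Qed.

Lemma weighing_propertyE n w :
  weighing_property n w <-> forall l : nat, (1 <= l <= n)%N -> l%:Z \in signed_sums w.
Proof.
by split=> Hw l /Hw; [case=> u ?; apply/signed_sumsP; exists u | move/signed_sumsP].
Qed.

Lemma mem_signed_sums_cons x w d z :
  d \in signs -> z \in signed_sums w -> d * x%:Z + z \in signed_sums (x :: w).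
Proof. exact: allpairs_f. Qed.

Lemma signed_sums0 w : 0 \in signed_sums w.
Proof.
elim: w => [|x w IHw]; first by rewrite inE.
by rewrite -[0]addr0 -{1}(mul0r x%:Z) mem_signed_sums_cons.
Qed.

Lemma signed_sumsN w z : z \in signed_sums w -> - z \in signed_sums w.
Proof.
elim: w z => [|x w IHw] z; first by rewrite !inE => /eqP ->.
rewrite signed_sums_cons => /allpairsP [[d y] /= [sd sy ->]].
rewrite opprD -mulNr mem_signed_sums_cons ?IHw //.
by case/signsP: sd => ->.
Qed.

Lemma signed_sumsD a b za zb :
  za \in signed_sums a -> zb \in signed_sums b -> za + zb \in signed_sums (a ++ b).
Proof.
elim: a za => [|x a IHa] za; first by rewrite inE => /eqP -> sb; rewrite add0r.
rewrite signed_sums_cons => /allpairsP [[d y] /= [sd sy ->]] sb.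
by rewrite -addrA mem_signed_sums_cons ?IHa.
Qed.

Lemma signed_sums_catP a b z : z \in signed_sums (a ++ b) ->
  exists za zb, [/\ za \in signed_sums a, zb \in signed_sums b & z = za + zb].
Proof.
elim: a z => [|x a IHa] z; first by exists 0, z; rewrite inE add0r.
rewrite cat_cons signed_sums_cons => /allpairsP [[d y] /= [sd /IHa [za [zb [sa sb ->]]] ->]].
by exists (d * x%:Z + za), zb; rewrite addrA mem_signed_sums_cons.
Qed.

Lemma signed_sums_bound w z :
  z \in signed_sums w -> - (sumn w)%:Z <= z <= (sumn w)%:Z.
Proof.
elim: w z => [|x w IHw] z; first by rewrite inE => /eqP ->.
rewrite signed_sums_cons => /allpairsP [[d y] /= [sd /IHw yb ->]].
by case/signsP: sd => ->; lia.
Qed.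

Lemma signed_sums_gap m b z : all (leq m) b -> z \in signed_sums b ->
  z = (sumn b)%:Z \/ z + m%:Z <= (sumn b)%:Z.
Proof.
elim: b z => [|x b IHb] z; first by rewrite inE => _ /eqP ->; left.
rewrite signed_sums_cons => /andP [mx mb] /allpairsP [[d y] /= [sd sy ->]].
have := signed_sums_bound sy.
by case: (IHb y mb sy) => [->|]; case/signsP: sd => ->; lia.
Qed.

End SignedSums.

Lemma weighing_interval n w : weighing_property n w ->
  forall z : int, (- n%:Z <= z <= n%:Z)%R -> z \in signed_sums w.
Proof.
move/weighing_propertyE => Hw [[|k]|k] zn; first exact: signed_sums0.
  by apply: Hw; lia.
by rewrite NegzE -[X in X \in _]opprK signed_sumsN // Hw //; lia.
Qed.

Lemma weighing_size n w : weighing_property n w -> (2 * n).+1 <= 3 ^ size w.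
Proof.
move=> Hw; rewrite -size_signed_sums.
have -> : (2 * n).+1 = size [seq (k%:Z - n%:Z)%R | k <- iota 0 (2 * n).+1].
  by rewrite size_map size_iota.
apply: uniq_leq_size; first by rewrite map_inj_uniq ?iota_uniq // => a b /addIr [].
move=> z /mapP [k]; rewrite mem_iota => kn ->.
by apply: (weighing_interval Hw); lia.
Qed.

Lemma sorted_weighing_nth n w i :
  sorted leq w -> sumn w = n -> weighing_property n w -> i < size w ->
  nth 0 w i <= (2 * sumn (take i w)).+1.
Proof.
move=> sw wn Hw iw; set R := sumn (take i w); set m := nth 0 w i.
rewrite leqNgt; apply/negP => big_m.
have b_ge_m : all (leq m) (drop i w).
  move: (drop_sorted i sw); rewrite (drop_nth 0 iw) /=.
  by move=> /(order_path_min leq_trans) ->; rewrite andbT.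
have n_split : n = R + sumn (drop i w) by rewrite -wn -sumn_cat cat_take_drop.
have m_le_b : m <= sumn (drop i w) by rewrite (drop_nth 0 iw) /=; lia.
have /(weighing_interval Hw) : (- n%:Z <= (n - (2 * R).+1)%:Z <= n%:Z)%R by lia.
rewrite -(cat_take_drop i w) => /signed_sums_catP [za [zb [sa sb z_eq]]].
have := signed_sums_bound sa.
by case: (signed_sums_gap b_ge_m sb); lia.
Qed.

Lemma sorted_weighing_take n w i :
  sorted leq w -> sumn w = n -> weighing_property n w -> i <= size w ->
  (2 * sumn (take i w)).+1 <= 3 ^ i.
Proof.
move=> sw wn Hw; elim: i => [|i IHi] iw; first by rewrite take0.
rewrite (take_nth 0 iw) -cats1 sumn_cat /= addn0 expnS.
have := sorted_weighing_nth sw wn Hw iw; have := IHi (ltnW iw); lia.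
Qed.

Lemma weighing_rcons w x :
  weighing_property (sumn w) w -> x <= (2 * sumn w).+1 ->
  weighing_property (sumn w + x) (rcons w x).
Proof.
move=> Hw x_le; apply/weighing_propertyE => l l_le; rewrite -cats1.
have mem_x d : (d \in signs) -> (d * x%:Z)%R \in signed_sums [:: x].
  by move=> sd; rewrite -[X in X \in _]addr0 mem_signed_sums_cons // inE.
have [l_gt | l_le_S] := ltnP (sumn w) l.
  rewrite -[Posz l](subrK (Posz x)) -[X in (_ + X)%R]mul1r signed_sumsD ?mem_x //.
  by apply: (weighing_interval Hw); lia.
rewrite -[Posz l]addr0 -(mul0r (Posz x)) signed_sumsD ?mem_x //.
by apply: (weighing_interval Hw); lia.
Qed.

Definition pow3s (i : nat) : seq nat := mkseq (expn 3) i.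

Lemma size_pow3s i : size (pow3s i) = i.
Proof. exact: size_mkseq. Qed.

Lemma sumn_pow3s i : (2 * sumn (pow3s i)).+1 = 3 ^ i.
Proof. by elim: i => // i IHi; rewrite /pow3s mkseqS -/(pow3s i) -cats1 sumn_cat /= expnS; lia. Qed.

Lemma weighing_pow3s i : weighing_property (sumn (pow3s i)) (pow3s i).
Proof.
elim: i => [l|i IHi]; first by case: l => [|l] /andP [].
rewrite /pow3s mkseqS -/(pow3s i) -cats1 sumn_cat /= addn0 cats1.
by apply: weighing_rcons IHi _; rewrite sumn_pow3s.
Qed.

Lemma pow3s_feasible i : feasible_partition ((3 ^ i - 1) %/ 2) (pow3s i).
Proof.
have n_eq : (3 ^ i - 1) %/ 2 = sumn (pow3s i) by have := sumn_pow3s i; lia.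
rewrite n_eq; split; [split | |].
- by apply/allP => _ /mapP [k _ ->]; rewrite expn_gt0.
- by [].
- exact: weighing_pow3s.
- by move=> w' [_ _ /weighing_size]; rewrite sumn_pow3s size_pow3s leq_exp2l.
- by apply: (homo_sorted (fun a b => @leq_pexp2l 3 a b isT)); exact: iota_sorted.
Qed.

Lemma feasible_size_pow3 i w :
  feasible_partition ((3 ^ i - 1) %/ 2) w -> size w = i.
Proof.
case=> [[_ _ /weighing_size w_ge] w_min _]; apply/eqP; rewrite eqn_leq.
have [pw _ _] := pow3s_feasible i.
rewrite -{1}(size_pow3s i) w_min //= -(@leq_exp2l 3) //.
by move: w_ge; have := sumn_pow3s i; lia.
Qed.

Theorem theorem3 :
  (forall (n : nat) (w : seq nat), 0 < n -> feasible_partition n w ->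
     forall i : nat, 1 <= i <= size w ->
       nth 0 w i.-1 <= 3 ^ i.-1 /\ sumn (take i w) <= (3 ^ i - 1) %/ 2)
  /\
  (forall i : nat, 1 <= i ->
     exists (n : nat) (w : seq nat),
       [/\ 0 < n, feasible_partition n w, i <= size w & nth 0 w i.-1 = 3 ^ i.-1])
  /\
  (forall i : nat, 1 <= i ->
     [/\ 0 < (3 ^ i - 1) %/ 2,
         exists w : seq nat, feasible_partition ((3 ^ i - 1) %/ 2) w,
         (forall w : seq nat, feasible_partition ((3 ^ i - 1) %/ 2) w -> size w = i) &
         (forall (n : nat) (w : seq nat), 0 < n -> feasible_partition n w ->
            size w = i -> n <= (3 ^ i - 1) %/ 2)]).
Proof.
have n_pos i : 1 <= i -> 0 < (3 ^ i - 1) %/ 2.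
  by case: i => // i _; rewrite expnS; have := expn_gt0 3 i; lia.
split; [|split] => [n w _ [[_ wn Hw] _ sw] [|i] // /andP [_ iw] | i i_pos | i i_pos].
- have := sorted_weighing_nth sw wn Hw iw.
  have := sorted_weighing_take sw wn Hw iw.
  have := sorted_weighing_take sw wn Hw (ltnW iw).
  by rewrite expnS /=; lia.
- exists ((3 ^ i - 1) %/ 2), (pow3s i); split; rewrite ?size_pow3s ?n_pos //.
    exact: pow3s_feasible.
  by case: i i_pos => // i _; rewrite nth_mkseq.
- split; [exact: n_pos | exists (pow3s i); exact: pow3s_feasible | exact: feasible_size_pow3 |].
  by move=> n w _ [[_ _ /weighing_size n_le] _ _] <-; lia.
Qed.
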